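(* Let $k\ge4$ be an integer and $\eta\in[\eta_{k+1},\eta_k)$. Then $\mathrm{co}(V)=\mathrm{co}(V_k)$, where $V=\{b_0\}\cup\{z_j:j\ge0\}\cup\{w_j:j\ge1\}$ and $V_k=\{b_0,z_0,z_1,\dots,z_k,w_1,\dots,w_k\}$.
   Context: For $\eta\in(0,\pi/3)$ let $a=\frac{e^{-i\eta}}{2\cos\eta}$, $c=\frac{1}{1-|a|^4}$, and for integers $j\ge0$ put $z_j=ca^{j+1}$, $w_j=1-c|a|^2a^j$, $b_0=a+c|a|^4$. For integers $k\ge1$ let $\Phi_k(\eta)=(1-|a|^4)\sin((k-1)\eta)-|a|^3\sin((k-2)\eta)+|a|^k\sin\eta$; for each $k\ge4$, $\Phi_k$ has a unique zero in $(\pi/k,\pi/(k-1))$, denoted $\eta_k$. $\mathrm{co}$ denotes convex hull. *)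

From Stdlib Require Import Reals List.
From Coquelicot Require Import Coquelicot.
Open Scope R_scope.

Definition cexpi (t : R) : C := (cos t, sin t).

Definition a_of (eta : R) : C := Cmult (cexpi (- eta)) (RtoC (/ (2 * cos eta))).
Definition c_of (eta : R) : R := / (1 - Cmod (a_of eta) ^ 4).
Definition z_of (eta : R) (j : nat) : C :=
  Cmult (RtoC (c_of eta)) (Cpow (a_of eta) (S j)).
Definition w_of (eta : R) (j : nat) : C :=
  Cminus (RtoC 1)
    (Cmult (RtoC (c_of eta * Cmod (a_of eta) ^ 2)) (Cpow (a_of eta) j)).
Definition b0_of (eta : R) : C :=
  Cplus (a_of eta) (RtoC (c_of eta * Cmod (a_of eta) ^ 4)).

Definition Phi (k : nat) (eta : R) : R :=
  let A := Cmod (a_of eta) in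
  (1 - A ^ 4) * sin ((INR k - 1) * eta) - A ^ 3 * sin ((INR k - 2) * eta)
  + A ^ k * sin eta.

(* eta_k characterization: a zero of Phi_k in (pi/k, pi/(k-1)) (unique by the paper). *)
Definition is_eta_k (k : nat) (e : R) : Prop :=
  PI / INR k < e < PI / (INR k - 1) /\ Phi k e = 0.

Definition conv_hull (S : C -> Prop) : C -> Prop :=
  fun x => exists l : list (R * C),
    List.Forall (fun p => 0 <= fst p /\ S (snd p)) l /\
    fold_right (fun p s => fst p + s) 0 l = 1 /\
    x = fold_right (fun p s => Cplus (Cmult (RtoC (fst p)) (snd p)) s) (RtoC 0) l.

Definition V_set (eta : R) : C -> Prop :=
  fun x => x = b0_of eta \/ (exists j : nat, x = z_of eta j)
           \/ (exists j : nat, (1 <= j)%nat /\ x = w_of eta j).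

Definition Vk_set (k : nat) (eta : R) : C -> Prop :=
  fun x => x = b0_of eta \/ (exists j : nat, (j <= k)%nat /\ x = z_of eta j)
           \/ (exists j : nat, (1 <= j <= k)%nat /\ x = w_of eta j).

(* Write t = tan eta, so that a = (1 - i t) / 2, z_j = c a^(j+1) and w_j = 1 - c |a|^2 a^j.
   Both sequences are affine images of the powers of a.  Hence, once a^N is a convex
   combination of 0 and of powers a^e with e < N, the same affine maps express z_(m+N) and
   w_(m+N) through 0 or 1 and points of smaller index, and by induction every z_j and w_j
   lies in co(V_k) as soon as 0, 1 and the points of index below N do.

   For k >= 5 take N = k + 3: writing a^(k-1) in suitable coordinates (l, m), the points
   0, 1, w_0, z_(k+1), z_(k+2), w_(k+1), w_(k+2) and a^(k+3) are placed, one after the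
   other, in triangles whose vertices are already known to lie in the hull.  For k = 4 the
   same is done with N = 7 directly in terms of t.  Each triangle membership amounts to
   the signs of three oriented areas, which are rational functions of the parameters.
   For k >= 5 these signs follow from Phi_(k+1)(eta) <= 0 on [eta_(k+1), eta_k), obtained
   by comparison with the root eta_(k+1); for k = 4 they follow from a quartic inequality
   in tan^2 eta. *)

From Stdlib Require Import Reals List Lra Lia Psatz.
From Coquelicot Require Import Coquelicot.
Open Scope R_scope.

(** * Convex hulls in the plane *)

Definition weight (l : list (R * C)) : R := fold_right (fun p s => fst p + s) 0 l.

Definition barycenter (l : list (R * C)) : C :=
  fold_right (fun (p : R * C) s => (RtoC (fst p) * snd p + s)%C) (RtoC 0) l.

Definition scale_weights (r : R) (l : list (R * C)) : list (R * C) :=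
  map (fun p : R * C => (r * fst p, snd p)) l.

Lemma weight_app l1 l2 : weight (l1 ++ l2) = weight l1 + weight l2.
Proof. induction l1 as [|p l IH]; simpl; [|rewrite IH]; ring. Qed.

Lemma barycenter_app l1 l2 : barycenter (l1 ++ l2) = (barycenter l1 + barycenter l2)%C.
Proof. induction l1 as [|p l IH]; simpl; [|rewrite IH]; ring. Qed.

Lemma weight_scale r l : weight (scale_weights r l) = r * weight l.
Proof. induction l as [|p l IH]; simpl; [|rewrite IH]; ring. Qed.

Lemma barycenter_scale r l : barycenter (scale_weights r l) = (r * barycenter l)%C.
Proof.
  induction l as [|p l IH]; simpl; [ring|].
  rewrite IH, RtoC_mult. ring.
Qed.

Lemma conv_hull_singleton (S : C -> Prop) x : S x -> conv_hull S x.
Proof.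
  intros Hx. exists ((1, x) :: nil). repeat split.
  - constructor; [simpl; split; [lra|exact Hx]|constructor].
  - simpl. ring.
  - simpl. ring.
Qed.

Lemma conv_hull_mono (S T : C -> Prop) x :
  (forall y, S y -> T y) -> conv_hull S x -> conv_hull T x.
Proof.
  intros HST [l [Hl Hsum]]. exists l. split; [|exact Hsum].
  eapply List.Forall_impl; [|exact Hl]. intros p [Hp HS]. auto.
Qed.

Lemma conv_hull_flatten (S : C -> Prop) l :
  List.Forall (fun p => 0 <= fst p /\ conv_hull S (snd p)) l ->
  exists l', List.Forall (fun p => 0 <= fst p /\ S (snd p)) l' /\
             weight l' = weight l /\ barycenter l' = barycenter l.
Proof.
  induction l as [|[r x] l IH]; intros Hl.
  - exists nil. auto.
  - apply List.Forall_cons_iff in Hl as [[Hr [lx [Hlx [Hwx Hbx]]]] Hl]. simpl in Hr.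
    destruct (IH Hl) as [l' [Hl' [Hw Hb]]].
    exists (scale_weights r lx ++ l'). repeat split.
    + apply List.Forall_app. split; [|exact Hl'].
      apply List.Forall_map. eapply List.Forall_impl; [|exact Hlx].
      intros p [Hp HS]. simpl. split; [apply Rmult_le_pos|]; assumption.
    + rewrite weight_app, weight_scale, Hw. fold (weight lx) in Hwx. rewrite Hwx.
      simpl. ring.
    + rewrite barycenter_app, barycenter_scale, Hb. fold (barycenter lx) in Hbx.
      rewrite <- Hbx. reflexivity.
Qed.

Lemma conv_hull_idem (S : C -> Prop) x : conv_hull (conv_hull S) x -> conv_hull S x.
Proof.
  intros [l [Hl [Hw Hb]]].
  destruct (conv_hull_flatten S l Hl) as [l' [Hl' [Hw' Hb']]].
  exists l'. split; [exact Hl'|]. fold (weight l') (barycenter l').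
  fold (weight l) (barycenter l) in Hw, Hb. rewrite Hw', Hb'. auto.
Qed.

Lemma conv_hull_affine (S : C -> Prop) (p q x : C) :
  conv_hull S x ->
  conv_hull (fun y => exists s, S s /\ y = (p * s + q)%C) (p * x + q)%C.
Proof.
  intros [l [Hl [Hw Hb]]].
  exists (map (fun e => (fst e, (p * snd e + q)%C)) l). repeat split.
  - apply List.Forall_map. eapply List.Forall_impl; [|exact Hl].
    intros e [He HS]. simpl. split; [exact He|]. exists (snd e). auto.
  - fold (weight l) in Hw. rewrite <- Hw. clear. unfold weight.
    induction l as [|e l IH]; simpl; [|rewrite IH]; reflexivity.
  - fold (weight l) in Hw. fold (barycenter l) in Hb. rewrite Hb.
    transitivity (p * barycenter l + weight l * q)%C; [now rewrite Hw; ring|].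
    clear. unfold weight, barycenter.
    induction l as [|e l IH]; simpl; [ring|]. rewrite <- IH, RtoC_plus. ring.
Qed.

Definition triangle (u v w : C) : C -> Prop := fun y => y = u \/ y = v \/ y = w.

Lemma conv_hull_of_triangle (S : C -> Prop) u v w x :
  conv_hull (triangle u v w) x ->
  conv_hull S u -> conv_hull S v -> conv_hull S w -> conv_hull S x.
Proof.
  intros Hx Hu Hv Hw. apply conv_hull_idem. eapply conv_hull_mono; [|exact Hx].
  intros y [->|[->| ->]]; assumption.
Qed.

Definition orient (u v w : C) : R :=
  (fst v - fst u) * (snd w - snd u) - (snd v - snd u) * (fst w - fst u).

(* Barycentric coordinates are ratios of oriented areas (Cramer's rule). *)
Lemma conv_hull_triangle_of_orient u v w x :
  orient u v w <> 0 ->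
  0 <= orient x v w / orient u v w -> 0 <= orient u x w / orient u v w ->
  0 <= orient u v x / orient u v w ->
  conv_hull (triangle u v w) x.
Proof.
  intros HD H1 H2 H3.
  exists ((orient x v w / orient u v w, u) :: (orient u x w / orient u v w, v)
          :: (orient u v x / orient u v w, w) :: nil).
  split; [|split].
  - repeat apply List.Forall_cons; try apply List.Forall_nil;
      simpl; unfold triangle; auto.
  - destruct u, v, w, x. unfold orient in *; simpl. field. exact HD.
  - destruct u as [u1 u2], v as [v1 v2], w as [w1 w2], x as [x1 x2].
    unfold orient in *; simpl in *. unfold Cplus, Cmult, RtoC; simpl.
    f_equal; field; exact HD.
Qed.

Lemma orient_sum u v w x : orient x v w + orient u x w + orient u v x = orient u v w.
Proof. unfold orient. ring. Qed.

Lemma conv_hull_triangle_of_orient_pos u v w x :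
  0 <= orient x v w -> 0 <= orient u x w -> 0 <= orient u v x ->
  0 < orient x v w + orient u x w + orient u v x -> conv_hull (triangle u v w) x.
Proof.
  rewrite orient_sum. intros H1 H2 H3 HD.
  apply conv_hull_triangle_of_orient; [lra|..]; apply Rdiv_le_0_compat; assumption.
Qed.

Lemma conv_hull_triangle_of_orient_neg u v w x :
  orient x v w <= 0 -> orient u x w <= 0 -> orient u v x <= 0 ->
  orient x v w + orient u x w + orient u v x < 0 -> conv_hull (triangle u v w) x.
Proof.
  rewrite orient_sum. intros H1 H2 H3 HD.
  apply conv_hull_triangle_of_orient; [lra|..];
    match goal with |- 0 <= ?a / ?d =>
      replace (a / d) with (- a / - d) by (field; lra); apply Rdiv_le_0_compat; lra end.
Qed.

Lemma pow_le_pow_of_le1 x m n : 0 <= x <= 1 -> (m <= n)%nat -> x ^ n <= x ^ m.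
Proof.
  intros Hx Hmn. replace n with (m + (n - m))%nat by lia. rewrite pow_add.
  assert (0 <= x ^ m) by (apply pow_le; lra).
  assert (x ^ (n - m) <= 1) by (rewrite <- (pow1 (n - m)); apply pow_incr; lra).
  nra.
Qed.

(* The affine maps [y |-> cz a^m y] and [y |-> 1 - cw a^m y] send a^N to the points of
   index m + N, and 0 and a^e to 0 or 1 and to the points of index m + e. *)
Lemma geometric_in_hull_of_prefix (U : C -> Prop) (a cz cw : C) N :
  conv_hull U (RtoC 0) -> conv_hull U (RtoC 1) ->
  (forall j, (j < N)%nat -> conv_hull U (cz * a ^ j)%C /\ conv_hull U (1 - cw * a ^ j)%C) ->
  conv_hull (fun y => y = RtoC 0 \/ exists e, (e < N)%nat /\ y = (a ^ e)%C) (a ^ N)%C ->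
  forall j, conv_hull U (cz * a ^ j)%C /\ conv_hull U (1 - cw * a ^ j)%C.
Proof.
  intros H0 H1 Hpre HN j.
  induction j as [j IH] using (well_founded_induction Wf_nat.lt_wf).
  destruct (Nat.lt_ge_cases j N) as [Hj|Hj]; [now apply Hpre|].
  assert (Himage : forall p q : C, conv_hull U q ->
            (forall e, (e < N)%nat -> conv_hull U (p * a ^ e + q)%C) ->
            conv_hull U (p * a ^ N + q)%C).
  { intros p q Hq He. apply conv_hull_idem.
    eapply conv_hull_mono; [|apply conv_hull_affine, HN].
    intros y [s [[->|[e [Hle ->]]] ->]]; [|now apply He].
    now rewrite Cmult_0_r, Cplus_0_l. }
  replace j with (j - N + N)%nat in IH |- * by lia. set (m := (j - N)%nat) in *.
  split.
  - replace (cz * a ^ (m + N))%C with (cz * a ^ m * a ^ N + 0)%C by (rewrite Cpow_add_r; ring).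
    apply Himage; [exact H0|]. intros e He.
    replace (cz * a ^ m * a ^ e + 0)%C with (cz * a ^ (m + e))%C by (rewrite Cpow_add_r; ring).
    apply IH. lia.
  - replace (1 - cw * a ^ (m + N))%C with (- (cw * a ^ m) * a ^ N + 1)%C
      by (rewrite Cpow_add_r; ring).
    apply Himage; [exact H1|]. intros e He.
    replace (- (cw * a ^ m) * a ^ e + 1)%C with (1 - cw * a ^ (m + e))%C
      by (rewrite Cpow_add_r; ring).
    apply IH. lia.
Qed.

Lemma conv_hull_V_iff_Vk k eta :
  (forall j, conv_hull (Vk_set k eta) (z_of eta j) /\ conv_hull (Vk_set k eta) (w_of eta j)) ->
  forall x, conv_hull (V_set eta) x <-> conv_hull (Vk_set k eta) x.
Proof.
  intros Hall x. split.
  - intros Hx. apply conv_hull_idem. eapply conv_hull_mono; [|exact Hx].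
    intros y [->|[[j ->]|[j [_ ->]]]]; [|apply Hall..].
    apply conv_hull_singleton. now left.
  - apply conv_hull_mono. intros y [->|[[j [_ ->]]|[j [Hj ->]]]].
    + now left.
    + right; left; eauto.
    + right; right. exists j. split; [lia|reflexivity].
Qed.

(** * The points as functions of t = tan eta *)

Definition a_tan (t : R) : C := (/ 2, - t / 2).
Definition q_tan (t : R) : R := (1 + t ^ 2) / 4.
Definition den (t : R) : R := (3 - t ^ 2) * (5 + t ^ 2).
Definition c_tan (t : R) : R := 16 / den t.

Definition zt (t : R) (p : nat) : C := (c_tan t * a_tan t ^ p)%C.
Definition wt (t : R) (p : nat) : C := (1 - RtoC (c_tan t * q_tan t) * a_tan t ^ p)%C.
Definition bt (t : R) : C := (a_tan t + RtoC (c_tan t * q_tan t ^ 2))%C.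

Definition a_mod (eta : R) : R := / (2 * cos eta).

(* [a_mod eta ^ (n+1) * Phi (n+2) eta] in terms of t = tan eta and (U, W) = a^n,
   see [Phi_as_coord]. *)
Definition Phi_coord (t U W : R) : R :=
  - (1 - q_tan t ^ 2) * (W - t * U) / 2 + q_tan t ^ 2 * W + q_tan t * t * (U ^ 2 + W ^ 2) / 2.

Lemma Cmod_cexpi x : Cmod (cexpi x) = 1.
Proof.
  unfold Cmod, cexpi; cbn [fst snd].
  pose proof (sin2_cos2 x) as H. unfold Rsqr in H.
  replace (cos x ^ 2 + sin x ^ 2) with 1 by nra. apply sqrt_1.
Qed.

Lemma Cpow_cexpi x n : (cexpi x ^ n)%C = cexpi (INR n * x).
Proof.
  induction n as [|n IH].
  - unfold cexpi. simpl. rewrite Rmult_0_l, cos_0, sin_0. reflexivity.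
  - rewrite Cpow_S, IH, S_INR. unfold cexpi, Cmult; simpl.
    replace ((INR n + 1) * x) with (x + INR n * x) by ring.
    rewrite cos_plus, sin_plus. f_equal; ring.
Qed.

Lemma Cpow_a_of eta n :
  (a_of eta ^ n)%C = (a_mod eta ^ n * cos (INR n * eta), - (a_mod eta ^ n * sin (INR n * eta))).
Proof.
  unfold a_of. rewrite Cpow_mult_l, Cpow_cexpi, <- RtoC_pow, <- Ropp_mult_distr_r.
  unfold cexpi, Cmult, RtoC, a_mod; simpl. rewrite cos_neg, sin_neg. f_equal; ring.
Qed.

Section Angle.
Variable eta : R.
Hypothesis Heta : 0 < eta < PI / 3.

Lemma cos_angle_gt : 1 / 2 < cos eta.
Proof. rewrite <- cos_PI3. pose proof PI_RGT_0. apply cos_decreasing_1; lra. Qed.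

Lemma tan_angle_range : 0 < tan eta /\ tan eta ^ 2 < 3.
Proof.
  pose proof PI_RGT_0. split; [apply tan_gt_0; lra|].
  assert (tan eta < sqrt 3) by (rewrite <- tan_PI3; apply tan_increasing; lra).
  assert (0 < tan eta) by (apply tan_gt_0; lra).
  assert (sqrt 3 * sqrt 3 = 3) by (apply sqrt_sqrt; lra). nra.
Qed.

Lemma Cmod_a_of : Cmod (a_of eta) = a_mod eta.
Proof.
  pose proof cos_angle_gt. unfold a_of. rewrite Cmod_mult, Cmod_cexpi, Cmod_R, Rmult_1_l.
  apply Rabs_right. apply Rle_ge, Rlt_le, Rinv_0_lt_compat. lra.
Qed.

Lemma a_of_tan : a_of eta = a_tan (tan eta).
Proof.
  pose proof cos_angle_gt. unfold a_of, cexpi, a_tan, tan.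
  rewrite cos_neg, sin_neg. unfold Cmult, RtoC; simpl. f_equal; field; lra.
Qed.

Lemma Cmod_a_of_sqr : Cmod (a_of eta) ^ 2 = q_tan (tan eta).
Proof.
  rewrite a_of_tan. unfold Cmod, a_tan, q_tan; cbn [fst snd].
  rewrite pow2_sqrt by nra. field.
Qed.

Lemma c_of_tan : c_of eta = c_tan (tan eta).
Proof.
  destruct tan_angle_range as [_ Ht3].
  unfold c_of, c_tan, den. replace (Cmod (a_of eta) ^ 4) with ((Cmod (a_of eta) ^ 2) ^ 2) by ring.
  rewrite Cmod_a_of_sqr. unfold q_tan. field. split; nra.
Qed.

Lemma z_of_tan j : z_of eta j = zt (tan eta) (S j).
Proof. unfold z_of, zt. now rewrite c_of_tan, a_of_tan. Qed.

Lemma w_of_tan j : w_of eta j = wt (tan eta) j.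
Proof. unfold w_of, wt. now rewrite c_of_tan, Cmod_a_of_sqr, a_of_tan. Qed.

Lemma b0_of_tan : b0_of eta = bt (tan eta).
Proof.
  unfold b0_of, bt. replace (Cmod (a_of eta) ^ 4) with ((Cmod (a_of eta) ^ 2) ^ 2) by ring.
  now rewrite c_of_tan, Cmod_a_of_sqr, a_of_tan.
Qed.

Lemma q_tan_angle : q_tan (tan eta) = a_mod eta ^ 2.
Proof. now rewrite <- Cmod_a_of_sqr, Cmod_a_of. Qed.

Lemma Phi_as_coord n :
  a_mod eta ^ S n * Phi (S (S n)) eta =
  Phi_coord (tan eta) (fst (a_of eta ^ n)%C) (snd (a_of eta ^ n)%C).
Proof.
  pose proof cos_angle_gt.
  rewrite Cpow_a_of. unfold Phi, Phi_coord. rewrite Cmod_a_of, q_tan_angle. cbn [fst snd].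
  replace (INR (S (S n)) - 1) with (INR n + 1) by (rewrite !S_INR; ring).
  replace (INR (S (S n)) - 2) with (INR n) by (rewrite !S_INR; ring).
  replace ((INR n + 1) * eta) with (INR n * eta + eta) by ring.
  rewrite sin_plus. set (th := INR n * eta).
  pose proof (sin2_cos2 th) as Hth. unfold Rsqr in Hth.
  set (B := a_mod eta ^ n).
  replace ((B * cos th) ^ 2 + (- (B * sin th)) ^ 2) with (B ^ 2)
    by (transitivity (B ^ 2 * (sin th * sin th + cos th * cos th)); [rewrite Hth|]; ring).
  replace (a_mod eta ^ S n) with (a_mod eta * B) by (unfold B; simpl; ring).
  replace (a_mod eta ^ S (S n)) with (a_mod eta ^ 2 * B) by (unfold B; simpl; ring).
  unfold tan, a_mod. clearbody B th. field. lra.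
Qed.

End Angle.

(** * Phi_(k+1) stays nonpositive past its root *)

Lemma sin_sub_ge x y : 0 <= y <= x -> x <= PI / 2 -> (x - y) * cos x <= sin x - sin y.
Proof.
  intros Hyx Hx. destruct (Req_dec x y) as [->|Hne]; [rewrite !Rminus_diag; lra|].
  destruct (MVT_cor2 sin cos y x) as [c [Hc Hcyx]];
    [lra | intros; apply derivable_pt_lim_sin|].
  rewrite Hc. pose proof PI_RGT_0.
  assert (cos x <= cos c) by (apply cos_decr_1; lra). nra.
Qed.

Lemma cos_sub_le x y : 0 <= x <= y -> y <= PI / 2 -> cos x - cos y <= (y - x) * sin y.
Proof.
  intros Hxy Hy. destruct (Req_dec x y) as [->|Hne]; [rewrite !Rminus_diag; lra|].
  destruct (MVT_cor2 cos (fun u => - sin u) x y) as [c [Hc Hcxy]];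
    [lra | intros; apply derivable_pt_lim_cos|].
  pose proof PI_RGT_0.
  assert (sin c <= sin y) by (apply sin_incr_1; lra). nra.
Qed.

Lemma pow_sub_le a b n : 0 <= a <= b -> b ^ S n - a ^ S n <= INR (S n) * b ^ n * (b - a).
Proof.
  intros Hab. induction n as [|n IH]; [simpl; lra|].
  assert (0 <= a ^ S n) by (apply pow_le; lra).
  assert (a ^ S n <= b ^ S n) by (apply pow_incr; lra).
  replace (b ^ S (S n) - a ^ S (S n)) with (b * (b ^ S n - a ^ S n) + a ^ S n * (b - a))
    by (simpl; ring).
  rewrite S_INR. simpl pow in *. nra.
Qed.

Lemma cos_sqr_ge_half x : 0 <= x <= PI / 4 -> 1 / 2 <= cos x ^ 2.
Proof.
  intros Hx. pose proof PI_RGT_0.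
  assert (0 <= cos (2 * x)) by (apply cos_ge_0; lra).
  rewrite cos_2a_cos in *. lra.
Qed.

Definition sin_coef (A : R) : R := 1 - A ^ 4 - A ^ 2 / 2.

Lemma a_mod_bounds x : 0 < x <= PI / 4 ->
  0 < a_mod x /\ a_mod x ^ 2 <= 1 / 2 /\ a_mod x <= 1 /\ a_mod x ^ 3 <= sin_coef (a_mod x).
Proof.
  intros Hx. pose proof PI_RGT_0. pose proof (cos_sqr_ge_half x ltac:(lra)).
  assert (0 < cos x) by (apply cos_gt_0; lra).
  assert (HA : 0 < a_mod x) by (unfold a_mod; apply Rinv_0_lt_compat; lra).
  assert (HA2 : a_mod x ^ 2 <= 1 / 2).
  { unfold a_mod. rewrite pow_inv. apply Rmult_le_reg_l with ((2 * cos x) ^ 2); [nra|].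
    rewrite Rinv_r by nra. nra. }
  unfold sin_coef. repeat split; nra.
Qed.

Lemma Phi_succ_trig k x : 0 < x < PI / 3 -> (2 <= k)%nat ->
  Phi (S k) x = sin_coef (a_mod x) * sin (INR k * x)
                + a_mod x ^ 3 * (sin x * cos (INR k * x) + a_mod x ^ (k - 2) * sin x).
Proof.
  intros Hx Hk. pose proof (cos_angle_gt x Hx).
  unfold Phi, sin_coef. rewrite (Cmod_a_of x Hx).
  replace (INR (S k) - 1) with (INR k) by (rewrite S_INR; ring).
  replace ((INR (S k) - 2) * x) with (INR k * x - x) by (rewrite S_INR; ring).
  rewrite sin_minus.
  replace (a_mod x ^ S k) with (a_mod x ^ 3 * a_mod x ^ (k - 2))
    by (rewrite <- pow_add; f_equal; lia).
  unfold a_mod. field. lra.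
Qed.

Lemma INR_ge_5 k : (5 <= k)%nat -> 5 <= INR k.
Proof. intros Hk. apply le_INR in Hk. simpl in Hk. lra. Qed.

Lemma PI_div_le_PI_div a b : 0 < a <= b -> PI / b <= PI / a.
Proof.
  intros Hab. pose proof PI_RGT_0.
  apply Rmult_le_compat_l; [lra | apply Rinv_le_contravar; lra].
Qed.

Lemma a_mod_le e x : 0 <= e <= x -> x < PI / 2 -> a_mod e <= a_mod x.
Proof.
  intros Hex Hx. pose proof PI_RGT_0.
  assert (0 < cos x) by (apply cos_gt_0; lra).
  assert (cos x <= cos e) by (apply cos_decr_1; lra).
  unfold a_mod. apply Rinv_le_contravar; lra.
Qed.

Lemma Phi_nonpos_past_pi_div k x : (5 <= k)%nat ->
  PI / INR k <= x < PI / (INR k - 1) -> Phi (S k) x <= 0.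
Proof.
  intros Hk [Hlo Hhi]. pose proof (INR_ge_5 k Hk) as HK. set (K := INR k) in *.
  pose proof PI_RGT_0. pose proof (PI_div_le_PI_div 4 (K - 1) ltac:(lra)).
  apply Rle_div_l in Hlo; [|lra]. apply Rlt_div_r in Hhi; [|lra].
  assert (0 < x < PI / 4) by (split; nra).
  rewrite Phi_succ_trig by (lra || lia). fold K.
  destruct (a_mod_bounds x) as [HA [HA2 [HA1 HAX]]]; [lra|].
  assert (0 < sin x) by (apply sin_gt_0; lra).
  set (y := K * x - PI).
  assert (0 <= y < PI / 4) by (unfold y; split; nra).
  replace (K * x) with (y + PI) by (unfold y; ring). rewrite neg_sin, neg_cos.
  assert (0 <= sin y) by (apply sin_ge_0; lra).
  assert (1 / 2 <= cos y) by (rewrite <- cos_PI3; apply cos_decr_1; lra).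
  assert (a_mod x ^ (k - 2) <= a_mod x ^ 2) by (apply pow_le_pow_of_le1; lra || lia).
  assert (0 <= sin_coef (a_mod x)) by (pose proof (pow_le (a_mod x) 3); lra).
  assert (0 <= a_mod x ^ 3 * sin x) by (apply Rmult_le_pos; [apply pow_le|]; lra).
  nra.
Qed.

(* [Phi (S k) x / (a_mod x ^ 3 * sin x)], written with p = PI - k x.  On [eta_(k+1), PI / k]
   its first term drops at rate at least k / 2, which outweighs the growth of the last. *)
Definition Phi_gauge (k : nat) (x : R) : R :=
  sin_coef (a_mod x) / a_mod x ^ 3 * (sin (PI - INR k * x) / sin x)
  - cos (PI - INR k * x) + a_mod x ^ (k - 2).

Lemma Phi_as_gauge k x : 0 < x < PI / 3 -> (2 <= k)%nat ->
  Phi (S k) x = a_mod x ^ 3 * sin x * Phi_gauge k x.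
Proof.
  intros Hx Hk. pose proof PI_RGT_0. pose proof (cos_angle_gt x Hx).
  assert (0 < sin x) by (apply sin_gt_0; lra).
  assert (0 < a_mod x) by (unfold a_mod; apply Rinv_0_lt_compat; lra).
  rewrite Phi_succ_trig by assumption. unfold Phi_gauge.
  rewrite sin_PI_x, Rtrigo_facts.cos_pi_minus.
  field; split; apply Rgt_not_eq; try apply pow_lt; lra.
Qed.

Lemma sin_coef_ratio_antitone A1 A2 : 0 < A1 <= A2 -> A2 <= 1 ->
  sin_coef A2 / A2 ^ 3 <= sin_coef A1 / A1 ^ 3.
Proof.
  intros HA HA2.
  assert (0 < A1 ^ 3) by (apply pow_lt; lra). assert (0 < A2 ^ 3) by (apply pow_lt; lra).
  assert (0 <= A1 ^ 3 * A2 ^ 3) by nra.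
  assert (0 <= (A2 - A1) * (A2 ^ 2 + A1 * A2 + A1 ^ 2 + A1 ^ 3 * A2 ^ 3 - A1 ^ 2 * A2 ^ 2 / 2))
    by (apply Rmult_le_pos; nra).
  apply Rmult_le_reg_r with (A1 ^ 3 * A2 ^ 3); [nra|].
  replace (sin_coef A2 / A2 ^ 3 * (A1 ^ 3 * A2 ^ 3)) with (sin_coef A2 * A1 ^ 3) by (field; lra).
  replace (sin_coef A1 / A1 ^ 3 * (A1 ^ 3 * A2 ^ 3)) with (sin_coef A1 * A2 ^ 3) by (field; lra).
  unfold sin_coef. lra.
Qed.

Lemma a_mod_sub_le e x : 0 < e <= x -> x <= PI / 4 -> a_mod x - a_mod e <= cos e - cos x.
Proof.
  intros Hex Hx. pose proof PI_RGT_0.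
  pose proof (cos_sqr_ge_half x ltac:(lra)). pose proof (cos_sqr_ge_half e ltac:(lra)).
  assert (0 < cos x) by (apply cos_gt_0; lra). assert (0 < cos e) by (apply cos_gt_0; lra).
  assert (cos x <= cos e) by (apply cos_decr_1; lra).
  assert (1 <= 2 * cos x * cos e) by nra.
  unfold a_mod.
  replace (/ (2 * cos x) - / (2 * cos e)) with ((cos e - cos x) / (2 * cos x * cos e))
    by (field; lra).
  apply Rmult_le_reg_r with (2 * cos x * cos e); [nra|].
  unfold Rdiv. rewrite Rmult_assoc, Rinv_l by lra. nra.
Qed.

Lemma a_mod_pow_rise k e x : (5 <= k)%nat -> 0 < e <= x -> x <= PI / 4 ->
  a_mod x ^ (k - 2) - a_mod e ^ (k - 2) <= (INR k - 2) / 2 * (x - e).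
Proof.
  intros Hk Hex Hx. pose proof PI_RGT_0. pose proof (INR_ge_5 k Hk).
  destruct (a_mod_bounds x) as [HA [HA2 [HA1 _]]]; [lra|].
  destruct (a_mod_bounds e) as [HAe _]; [lra|].
  pose proof (a_mod_le e x ltac:(lra) ltac:(lra)).
  replace (k - 2)%nat with (S (k - 3)) by lia.
  pose proof (pow_sub_le (a_mod e) (a_mod x) (k - 3) ltac:(lra)) as Hmvt.
  replace (INR (S (k - 3))) with (INR k - 2) in Hmvt
    by (rewrite S_INR, minus_INR by lia; simpl; ring).
  assert (a_mod x ^ (k - 3) <= a_mod x ^ 2) by (apply pow_le_pow_of_le1; lra || lia).
  assert (0 <= a_mod x ^ (k - 3)) by (apply pow_le; lra).
  assert (a_mod x - a_mod e <= x - e).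
  { pose proof (a_mod_sub_le e x Hex Hx). pose proof (cos_sub_le e x ltac:(lra) ltac:(lra)).
    pose proof (SIN_bound x). nra. }
  assert (a_mod x ^ (k - 3) * (a_mod x - a_mod e) <= (x - e) / 2) by nra.
  apply Rle_trans with ((INR k - 2) * (a_mod x ^ (k - 3) * (a_mod x - a_mod e))); [lra|].
  replace ((INR k - 2) / 2 * (x - e)) with ((INR k - 2) * ((x - e) / 2)) by field.
  apply Rmult_le_compat_l; lra.
Qed.

Section BeforePiDivK.
Variables (k : nat) (e x : R).
Hypotheses (Hk : (5 <= k)%nat) (He : PI / (INR k + 1) < e) (Hex : e <= x) (Hx : x < PI / INR k).

Let window : 5 <= INR k /\ 0 < e /\ x < PI / 5 /\ PI - PI / 6 < INR k * e /\ INR k * x < PI.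
Proof.
  pose proof (INR_ge_5 k Hk). pose proof PI_RGT_0.
  pose proof (PI_div_le_PI_div 5 (INR k) ltac:(lra)).
  pose proof (PI_div_le_PI_div 6 (INR k + 1) ltac:(lra)).
  assert (0 < PI / (INR k + 1)) by (apply Rdiv_lt_0_compat; lra).
  assert (Hmul : INR k * e = (INR k + 1) * e - e) by ring.
  apply Rlt_div_l in He; [|lra]. apply Rlt_div_r in Hx; [|lra].
  repeat split; nra.
Qed.

Lemma sin_ratio_drop :
  sin (PI - INR k * x) / sin x - sin (PI - INR k * e) / sin e <= - (INR k * (x - e)) / 2.
Proof.
  destruct window as (HK & He0 & Hx5 & Hke & Hkx). pose proof PI_RGT_0.
  assert (INR k * e <= INR k * x) by (apply Rmult_le_compat_l; lra).
  set (p1 := PI - INR k * e). set (p2 := PI - INR k * x).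
  assert (p2 <= p1) by (unfold p1, p2; lra).
  assert (Hsin : (p1 - p2) * cos p1 <= sin p1 - sin p2) by (apply sin_sub_ge; unfold p1, p2; lra).
  assert (1 / 2 <= cos p1) by (rewrite <- cos_PI3; apply cos_decr_1; unfold p1; lra).
  assert (0 < sin p1) by (apply sin_gt_0; unfold p1; lra).
  assert (0 < sin e) by (apply sin_gt_0; lra).
  assert (sin e <= sin x) by (apply sin_incr_1; lra).
  assert (sin x <= 1) by (pose proof (SIN_bound x); lra).
  assert (sin p1 / sin x <= sin p1 / sin e)
    by (apply Rmult_le_compat_l; [lra | apply Rinv_le_contravar; lra]).
  assert ((sin p2 - sin p1) / sin x <= - (p1 - p2) / 2).
  { apply Rmult_le_reg_r with (sin x); [lra|].
    replace ((sin p2 - sin p1) / sin x * sin x) with (sin p2 - sin p1) by (field; lra).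
    nra. }
  replace (INR k * (x - e)) with (p1 - p2) by (unfold p1, p2; ring).
  replace (sin p2 / sin x) with ((sin p2 - sin p1) / sin x + sin p1 / sin x) by (field; lra).
  lra.
Qed.

Lemma Phi_gauge_antitone : Phi_gauge k x <= Phi_gauge k e.
Proof.
  pose proof sin_ratio_drop as Hdrop.
  destruct window as (HK & He0 & Hx5 & Hke & Hkx). pose proof PI_RGT_0.
  pose proof (a_mod_pow_rise k e x Hk (conj He0 Hex) ltac:(lra)) as Hrise.
  destruct (a_mod_bounds x) as [HA [_ [HA1 HAX]]]; [lra|].
  destruct (a_mod_bounds e) as [HAe _]; [lra|].
  pose proof (a_mod_le e x ltac:(lra) ltac:(lra)).
  pose proof (sin_coef_ratio_antitone (a_mod e) (a_mod x) ltac:(lra) HA1) as Hcoef.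
  assert (1 <= sin_coef (a_mod x) / a_mod x ^ 3).
  { assert (0 < a_mod x ^ 3) by (apply pow_lt; lra).
    apply Rmult_le_reg_r with (a_mod x ^ 3); [lra|].
    unfold Rdiv. rewrite Rmult_assoc, Rinv_l; lra. }
  assert (INR k * e <= INR k * x) by (apply Rmult_le_compat_l; lra).
  assert (cos (PI - INR k * e) <= cos (PI - INR k * x)) by (apply cos_decr_1; lra).
  assert (0 <= sin (PI - INR k * e) / sin e).
  { apply Rdiv_le_0_compat; [apply sin_ge_0 | apply sin_gt_0]; lra. }
  unfold Phi_gauge.
  set (r1 := sin (PI - INR k * e) / sin e) in *. set (r2 := sin (PI - INR k * x) / sin x) in *.
  set (c1 := sin_coef (a_mod e) / a_mod e ^ 3) in *.
  set (c2 := sin_coef (a_mod x) / a_mod x ^ 3) in *.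
  assert (c2 * r2 - c1 * r1 <= r2 - r1).
  { assert (r2 - r1 <= 0) by nra. nra. }
  nra.
Qed.

End BeforePiDivK.

Lemma Phi_nonpos_after_root k e x : (5 <= k)%nat -> PI / (INR k + 1) < e ->
  Phi (S k) e = 0 -> e <= x < PI / (INR k - 1) -> Phi (S k) x <= 0.
Proof.
  intros Hk He Hroot [Hex Hx].
  destruct (Rle_lt_dec (PI / INR k) x) as [Hpast|Hbefore]; [now apply Phi_nonpos_past_pi_div|].
  pose proof (INR_ge_5 k Hk). pose proof PI_RGT_0.
  pose proof (PI_div_le_PI_div 5 (INR k) ltac:(lra)).
  assert (0 < e) by (apply Rlt_trans with (PI / (INR k + 1)); [apply Rdiv_lt_0_compat|]; lra).
  assert (Hpos : forall y, 0 < y < PI / 3 -> 0 < a_mod y ^ 3 * sin y).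
  { intros y Hy. apply Rmult_lt_0_compat; [apply pow_lt | apply sin_gt_0; lra].
    unfold a_mod. apply Rinv_0_lt_compat. pose proof (cos_angle_gt y Hy). lra. }
  rewrite Phi_as_gauge in Hroot |- * by (lra || lia).
  assert (Phi_gauge k e = 0).
  { pose proof (Hpos e ltac:(lra)). destruct (Rmult_integral _ _ Hroot); [lra | assumption]. }
  pose proof (Phi_gauge_antitone k e x Hk He Hex Hbefore).
  pose proof (Hpos x ltac:(lra)). nra.
Qed.

(** * Triangle certificates *)

(* Coordinates (l, m) for a^(k-1): Im (s_lm * a^2) = t l / 2 and Im s_lm = - 2 t m, so
   l, m > 0 say that Im a^(k+1) > 0 > Im a^(k-1). *)
Definition s_lm (t l m : R) : C := (- l - m * (1 - t ^ 2), - 2 * t * m).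
Definition spow (t l m : R) (p : nat) : C := (s_lm t l m * a_tan t ^ p)%C.
Definition zs (t l m : R) (p : nat) : C := (c_tan t * spow t l m p)%C.
Definition ws (t l m : R) (p : nat) : C := (1 - RtoC (c_tan t * q_tan t) * spow t l m p)%C.

Definition phi_lm (t l m : R) : R :=
  (11 + 5 * t ^ 2 - 7 * t ^ 4 - t ^ 6) * m + 4 * (1 + t ^ 2) ^ 3 * m ^ 2
  - (15 - 2 * t ^ 2 - t ^ 4) * l + 8 * (1 - t ^ 4) * l * m + 4 * (1 + t ^ 2) * l ^ 2.

Lemma Phi_coord_s_lm t l m :
  Phi_coord t (fst (s_lm t l m)) (snd (s_lm t l m)) = t / 32 * phi_lm t l m.
Proof. unfold Phi_coord, s_lm, phi_lm, q_tan. simpl. field. Qed.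

Lemma Im_s_lm_mul_sqr t l m : snd (s_lm t l m * a_tan t ^ 2)%C = t * l / 2.
Proof. unfold s_lm, a_tan, Cmult. simpl. field. Qed.

Definition g4 (t : R) : R := t ^ 8 + 16 * t ^ 6 + 10 * t ^ 4 - 152 * t ^ 2 + 109.

Lemma Phi_coord_a_tan_sqr t :
  Phi_coord t (fst (a_tan t ^ 2)%C) (snd (a_tan t ^ 2)%C)
  = t * (t ^ 2 - 3) * ((1 + t ^ 2) ^ 2 - 8) / 64.
Proof. unfold Phi_coord, q_tan, a_tan, Cmult. simpl. field. Qed.

Lemma Phi_coord_a_tan_cube t :
  Phi_coord t (fst (a_tan t ^ 3)%C) (snd (a_tan t ^ 3)%C) = t * g4 t / 512.
Proof. unfold Phi_coord, q_tan, g4, a_tan, Cmult. simpl. field. Qed.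

Lemma den_pos t : t ^ 2 < 3 -> 0 < den t.
Proof. intros. unfold den. nra. Qed.

(* A certificate writes an oriented area as [K * Q] or [- (K * Q)] with [K > 0] and [Q] a
   sum of products of visible sign; [prove_sign] follows this shape and leaves the
   coefficient polynomials in t to [nra]. *)
Ltac prove_sign :=
  lazymatch goal with
  | |- - ?x < 0 => enough (0 < x) by lra; prove_sign
  | |- - ?x <= 0 => enough (0 <= x) by lra; prove_sign
  | |- 0 <= - ?x => enough (x <= 0) by lra; prove_sign
  | |- 0 < ?x * ?y => apply Rmult_lt_0_compat; prove_sign
  | |- 0 <= ?x * ?y => apply Rmult_le_pos; prove_sign
  | |- 0 < ?x + ?y => apply Rplus_lt_le_0_compat; prove_sign
  | |- 0 <= ?x + ?y => apply Rplus_le_le_0_compat; prove_sign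
  | |- 0 < ?x / ?y => apply Rdiv_lt_0_compat; prove_sign
  | |- 0 <= ?x / ?y => apply Rdiv_le_0_compat; prove_sign
  | |- 0 < ?x ^ _ => apply pow_lt; prove_sign
  | |- 0 <= ?x ^ _ => apply pow_le; prove_sign
  | |- 0 < den _ => apply den_pos; nra
  | |- _ => first [assumption | lra | nra]
  end.

Ltac orient_factor F :=
  lazymatch goal with
  | |- context [orient ?u ?v ?w] =>
      replace (orient u v w) with F
        by (unfold orient, zt, wt, bt, zs, ws, spow, s_lm, phi_lm, a_tan, c_tan, q_tan, den;
            cbn [Cpow]; unfold Cminus, Cplus, Cmult, Copp, RtoC; cbn [fst snd];
            unfold g4; field; repeat split; intro; nra)
  end; prove_sign.

Definition large_params (t l m : R) : Prop :=
  0 < t < 1 /\ 0 < l <= 1/4 /\ 0 < m /\ phi_lm t l m <= 0.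

Lemma even_pow_chain t : 0 < t < 1 ->
  0 < t ^ 2 < 1 /\ t ^ 4 <= t ^ 2 /\ t ^ 6 <= t ^ 4 /\ t ^ 8 <= t ^ 6 /\ t ^ 10 <= t ^ 8.
Proof.
  intros Ht.
  assert (0 <= t ^ 2 <= 1)
    by (split; [apply pow_le; lra | rewrite <- (pow1 2); apply pow_incr; lra]).
  replace (t ^ 4) with ((t ^ 2) ^ 2) by ring. replace (t ^ 6) with ((t ^ 2) ^ 3) by ring.
  replace (t ^ 8) with ((t ^ 2) ^ 4) by ring. replace (t ^ 10) with ((t ^ 2) ^ 5) by ring.
  repeat split; try (apply pow_le_pow_of_le1; [lra | lia]); nra.
Qed.

Lemma zs3_in_triangle t l m : large_params t l m ->
  conv_hull (triangle (zt t 1) (zs t l m 2) (wt t 1)) (zs t l m 3).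
Proof.
  intros (Ht & Hl & Hm & Hphi). pose proof (even_pow_chain t Ht).
  assert (orient (zs t l m 3) (zs t l m 2) (wt t 1) <= 0) by
    orient_factor (- (2 * (1 + t^2) * t / den t ^ 2 * (- phi_lm t l m))).
  assert (orient (zt t 1) (zs t l m 3) (wt t 1) < 0) by
    orient_factor (- (2 * t * (5 + t^2) / den t ^ 2 * ((19/2 + 1/2 * t^4 - 6 * t^2) +
      (14 + 10 * t^2 - 6 * t^4 - 2 * t^6) * m + 4 * (1 + t^2)^3 * m^2 + 8 * (1 - t^4) * l * m +
      4 * (1 + t^2) * l^2 + - phi_lm t l m + (10 + 8 * t^2 - 2 * t^4) * (1/4 - l)))).
  assert (orient (zt t 1) (zs t l m 2) (zs t l m 3) < 0) by
    orient_factor (- (8 * (1 + t^2)^2 * t / den t ^ 2 * (4 * m + (1 + t^2)^2 * m^2 +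
      2 * (1 - t^2) * l * m + l^2))).
  apply conv_hull_triangle_of_orient_neg; lra.
Qed.

Lemma origin_in_triangle t l m : large_params t l m ->
  conv_hull (triangle (zt t 1) (zs t l m 1) (zs t l m 3)) 0.
Proof.
  intros (Ht & Hl & Hm & Hphi). pose proof (even_pow_chain t Ht).
  assert (orient 0 (zs t l m 1) (zs t l m 3) < 0) by
    orient_factor (- (32 * (1 + t^2) * t / den t ^ 2 * ((1 + t^2)^2 * m^2 +
      2 * (1 - t^2) * l * m + l^2))).
  assert (orient (zt t 1) 0 (zs t l m 3) < 0) by
    orient_factor (- (32 * (1 + t^2) * t * l / den t ^ 2)).
  assert (orient (zt t 1) (zs t l m 1) 0 < 0) by
    orient_factor (- (128 * (1 + t^2) * t * m / den t ^ 2)).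
  apply conv_hull_triangle_of_orient_neg; lra.
Qed.

Lemma ws2_in_triangle t l m : large_params t l m ->
  conv_hull (triangle (wt t 1) (bt t) (ws t l m 1)) (ws t l m 2).
Proof.
  intros (Ht & Hl & Hm & Hphi). pose proof (even_pow_chain t Ht).
  assert (0 <= orient (ws t l m 2) (bt t) (ws t l m 1)) by
    orient_factor (1/2 * (1 + t^2)^2 * t / den t ^ 2 * (- phi_lm t l m)).
  assert (0 < orient (wt t 1) (ws t l m 2) (ws t l m 1)) by
    orient_factor (2 * (1 + t^2)^3 * t / den t ^ 2 * ((3 - t^2) * m + (1 + t^2)^2 * m^2 + l +
      2 * (1 - t^2) * l * m + l^2)).
  assert (0 < orient (wt t 1) (bt t) (ws t l m 2)) by
    orient_factor (1/2 * (1 + t^2) * t / den t ^ 2 * ((215/4 - 16 * t^2 - 8 * t^4) +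
      (46 + t^6 - 37 * t^2 - 9 * t^4) * l + (19 + 40 * t^2 + 22 * t^4 - t^8) * m +
      9 * (1/4 - l))).
  apply conv_hull_triangle_of_orient_pos; lra.
Qed.

Lemma one_in_triangle t l m : large_params t l m ->
  conv_hull (triangle (wt t 0) (ws t l m 0) (ws t l m 2)) 1.
Proof.
  intros (Ht & Hl & Hm & Hphi). pose proof (even_pow_chain t Ht).
  assert (orient 1 (ws t l m 0) (ws t l m 2) < 0) by
    orient_factor (- (8 * (1 + t^2)^2 * t / den t ^ 2 * ((1 + t^2)^2 * m^2 +
      2 * (1 - t^2) * l * m + l^2))).
  assert (orient (wt t 0) 1 (ws t l m 2) < 0) by
    orient_factor (- (8 * (1 + t^2)^2 * t * l / den t ^ 2)).
  assert (orient (wt t 0) (ws t l m 0) 1 < 0) by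
    orient_factor (- (32 * (1 + t^2)^2 * t * m / den t ^ 2)).
  apply conv_hull_triangle_of_orient_neg; lra.
Qed.

Lemma wt0_in_triangle t : 0 < t < 1 ->
  conv_hull (triangle (bt t) 0 (wt t 1)) (wt t 0).
Proof.
  intros Ht. pose proof (even_pow_chain t Ht).
  assert (orient (wt t 0) 0 (wt t 1) < 0) by
    orient_factor (- (2 * (1 + t^2) * t / den t ^ 2 * (11 - 6 * t^2 - t^4))).
  assert (orient (bt t) (wt t 0) (wt t 1) < 0) by
    orient_factor (- (2 * (1 + t^2)^2 * t * (5 + t^2) / den t ^ 2)).
  assert (orient (bt t) 0 (wt t 0) < 0) by
    orient_factor (- (1/2 * t / den t * (11 - 6 * t^2 - t^4))).
  apply conv_hull_triangle_of_orient_neg; lra.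
Qed.

Lemma zs4_in_triangle t l m : large_params t l m ->
  conv_hull (triangle 0 (zs t l m 3) (ws t l m 2)) (zs t l m 4).
Proof.
  intros (Ht & Hl & Hm & Hphi). pose proof (even_pow_chain t Ht).
  assert (orient (zs t l m 4) (zs t l m 3) (ws t l m 2) < 0) by
    orient_factor (- (2 * (1 + t^2) * t / den t ^ 2 * ((3 + 8 * t^2 + 6 * t^4 - t^8) * m^2 +
      (6 + 2 * t^6 - 2 * t^2 - 6 * t^4) * l * m + (3 + 2 * t^2 - t^4) * l^2 +
      (11 + 5 * t^2 - 7 * t^4 - t^6) * m + - phi_lm t l m))).
  assert (orient 0 (zs t l m 4) (ws t l m 2) < 0) by
    orient_factor (- (2 * t / den t ^ 2 * ((15 + 28 * t^2 + 10 * t^4 - 4 * t^6 - t^8) * m +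
      (1 + t^2)^5 * m^2 + (30 + 2 * t^4 + 2 * t^6 - 34 * t^2) * l +
      (2 + 4 * t^2 - 4 * t^6 - 2 * t^8) * l * m + (1 + t^2)^3 * l^2))).
  assert (orient 0 (zs t l m 3) (zs t l m 4) < 0) by
    orient_factor (- (2 * (1 + t^2)^3 * t / den t ^ 2 * ((1 + t^2)^2 * m^2 +
      2 * (1 - t^2) * l * m + l^2))).
  apply conv_hull_triangle_of_orient_neg; lra.
Qed.

Lemma ws3_in_triangle t l m : large_params t l m ->
  conv_hull (triangle 1 (ws t l m 2) (zt t 2)) (ws t l m 3).
Proof.
  intros (Ht & Hl & Hm & Hphi). pose proof (even_pow_chain t Ht).
  assert (orient (ws t l m 3) (ws t l m 2) (zt t 2) < 0) by
    orient_factor (- (1/2 * (1 + t^2)^2 * t / den t ^ 2 * (8 * (1 - t^4) * m +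
      (3 + 8 * t^2 + 6 * t^4 - t^8) * m^2 + 4 * (1 + t^2) * l +
      (6 + 2 * t^6 - 2 * t^2 - 6 * t^4) * l * m + (3 + 2 * t^2 - t^4) * l^2 + - phi_lm t l m))).
  assert (orient 1 (ws t l m 3) (zt t 2) < 0) by
    orient_factor (- (1/2 * (1 + t^2) * t / den t ^ 2 * ((19 + 40 * t^2 + 22 * t^4 - t^8) * m +
      (41 + t^6 - 29 * t^2 - 5 * t^4) * l))).
  assert (orient 1 (ws t l m 2) (ws t l m 3) < 0) by
    orient_factor (- (1/2 * (1 + t^2)^4 * t / den t ^ 2 * ((1 + t^2)^2 * m^2 +
      2 * (1 - t^2) * l * m + l^2))).
  apply conv_hull_triangle_of_orient_neg; lra.
Qed.

Lemma spow4_in_triangle t l m : large_params t l m ->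
  conv_hull (triangle 0 1 (spow t l m 3)) (spow t l m 4).
Proof.
  intros (Ht & Hl & Hm & Hphi). pose proof (even_pow_chain t Ht).
  assert (0 < orient (spow t l m 4) 1 (spow t l m 3)) by
    orient_factor (1/128 * (1 + t^2) * t * ((3 + 8 * t^2 + 6 * t^4 - t^8) * m^2 +
      (1 + t^2)^2 * l + (6 + 2 * t^6 - 2 * t^2 - 6 * t^4) * l * m + (3 + 2 * t^2 - t^4) * l^2 +
      (11 + 5 * t^2 - 7 * t^4 - t^6) * m + - phi_lm t l m)).
  assert (0 < orient 0 (spow t l m 4) (spow t l m 3)) by
    orient_factor (1/128 * (1 + t^2)^3 * t * ((1 + t^2)^2 * m^2 + 2 * (1 - t^2) * l * m + l^2)).
  assert (0 < orient 0 1 (spow t l m 4)) by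
    orient_factor (1/8 * t * ((1 + t^2)^2 * m + 2 * (1 - t^2) * l)).
  apply conv_hull_triangle_of_orient_pos; lra.
Qed.

(* 183/100 exceeds tan^2 eta_4 = 2 sqrt 2 - 1. *)
Definition k4_params (t : R) : Prop := 0 < t /\ 4/5 <= t ^ 2 <= 183/100 /\ g4 t <= 0.

Lemma origin_in_triangle_k4 t : k4_params t ->
  conv_hull (triangle (zt t 3) (zt t 5) (wt t 3)) 0.
Proof.
  intros (Ht & Hv & Hg).
  assert (0 <= (t ^ 2 - 4/5) * (183/100 - t ^ 2)) by nra.
  assert (orient 0 (zt t 5) (wt t 3) < 0) by
    orient_factor (- (t / den t ^ 2 * (82 * t^2 + t^8 - 37 - 12 * t^4 - 2 * t^6))).
  assert (orient (zt t 3) 0 (wt t 3) < 0) by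
    orient_factor (- (2 * t * (3 - t^2) / den t)).
  assert (orient (zt t 3) (zt t 5) 0 < 0) by
    orient_factor (- (2 * (1 + t^2)^3 * t / den t ^ 2)).
  apply conv_hull_triangle_of_orient_neg; lra.
Qed.

Lemma one_in_triangle_k4 t : k4_params t ->
  conv_hull (triangle (zt t 1) (wt t 1) (wt t 4)) 1.
Proof.
  intros (Ht & Hv & Hg).
  assert (0 <= (t ^ 2 - 4/5) * (183/100 - t ^ 2)) by nra.
  assert (orient 1 (wt t 1) (wt t 4) < 0) by
    orient_factor (- (1/2 * (1 + t^2)^3 * t * (3 - t^2) / den t ^ 2)).
  assert (orient (zt t 1) 1 (wt t 4) < 0) by
    orient_factor (- ((1 + t^2) * t * (3 - t^2) / den t ^ 2 * (6 * t^2 + t^4 - 3))).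
  assert (orient (zt t 1) (wt t 1) 1 < 0) by
    orient_factor (- (2 * (1 + t^2) * t / den t)).
  apply conv_hull_triangle_of_orient_neg; lra.
Qed.

Lemma wt0_in_triangle_k4 t : k4_params t ->
  conv_hull (triangle (zt t 3) (zt t 4) (wt t 3)) (wt t 0).
Proof.
  intros (Ht & Hv & Hg).
  assert (0 <= (t ^ 2 - 4/5) * (183/100 - t ^ 2)) by nra.
  assert (orient (wt t 0) (zt t 4) (wt t 3) < 0) by
    orient_factor (- ((1 + t^2)^4 * t / den t ^ 2)).
  assert (orient (zt t 3) (wt t 0) (wt t 3) < 0) by
    orient_factor (- (1/2 * (1 + t^2)^2 * t / den t)).
  assert (orient (zt t 3) (zt t 4) (wt t 0) < 0) by
    orient_factor (- (8 * (1 + t^2) * t * (3 - t^2) / den t ^ 2)).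
  apply conv_hull_triangle_of_orient_neg; lra.
Qed.

Lemma zt6_in_triangle_k4 t : k4_params t ->
  conv_hull (triangle (bt t) (zt t 5) (wt t 1)) (zt t 6).
Proof.
  intros (Ht & Hv & Hg).
  assert (0 <= (t ^ 2 - 4/5) * (183/100 - t ^ 2)) by nra.
  assert (orient (zt t 6) (zt t 5) (wt t 1) <= 0) by
    orient_factor (- (1/8 * (1 + t^2) * t / den t ^ 2 * (- g4 t))).
  assert (orient (bt t) (zt t 6) (wt t 1) < 0) by
    orient_factor (- (1/8 * (1 + t^2) * t * (3 - t^2) / den t ^ 2 * (281 +
      t^6 - 77 * t^2 - 37 * t^4))).
  assert (orient (bt t) (zt t 5) (zt t 6) < 0) by
    orient_factor (- (1/4 * (1 + t^2)^2 * t * (3 - t^2)^2 / den t ^ 2 * (3 + t^2))).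
  apply conv_hull_triangle_of_orient_neg; lra.
Qed.

Lemma wt5_in_triangle_k4 t : k4_params t ->
  conv_hull (triangle (bt t) (zt t 3) (wt t 4)) (wt t 5).
Proof.
  intros (Ht & Hv & Hg).
  assert (0 <= (t ^ 2 - 4/5) * (183/100 - t ^ 2)) by nra.
  assert (orient (wt t 5) (zt t 3) (wt t 4) < 0) by
    orient_factor (- (1/32 * (1 + t^2)^2 * t / den t ^ 2 * (181 + 2 * t^4 + 8 * t^6 +
      t^8 - 80 * t^2))).
  assert (orient (bt t) (wt t 5) (wt t 4) <= 0) by
    orient_factor (- (1/32 * (1 + t^2)^2 * t / den t ^ 2 * (- g4 t))).
  assert (orient (bt t) (zt t 3) (wt t 5) < 0) by
    orient_factor (- (1/8 * (1 + t^2) * t / den t ^ 2 * (499 +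
      3 * t^8 - 100 * t^2 - 94 * t^4 - 4 * t^6))).
  apply conv_hull_triangle_of_orient_neg; lra.
Qed.

Lemma zt7_in_triangle_k4 t : k4_params t ->
  conv_hull (triangle (zt t 1) (zt t 5) (wt t 1)) (zt t 7).
Proof.
  intros (Ht & Hv & Hg).
  assert (0 <= (t ^ 2 - 4/5) * (183/100 - t ^ 2)) by nra.
  assert (orient (zt t 7) (zt t 5) (wt t 1) < 0) by
    orient_factor (- (2 * (1 + t^2) * t / den t ^ 2 * (20 * t^2 - 11 - 3 * t^4 - 2 * t^6))).
  assert (orient (zt t 1) (zt t 7) (wt t 1) < 0) by
    orient_factor (- (1/8 * (1 + t^2) * t / den t * (61 + t^4 - 34 * t^2))).
  assert (orient (zt t 1) (zt t 5) (zt t 7) < 0) by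
    orient_factor (- (1/8 * (1 + t^2)^2 * t * (3 - t^2)^2 / den t ^ 2 * (9 + t^2))).
  apply conv_hull_triangle_of_orient_neg; lra.
Qed.

Lemma wt6_in_triangle_k4 t : k4_params t ->
  conv_hull (triangle (bt t) (wt t 4) (wt t 0)) (wt t 6).
Proof.
  intros (Ht & Hv & Hg).
  assert (0 <= (t ^ 2 - 4/5) * (183/100 - t ^ 2)) by nra.
  assert (0 < orient (wt t 6) (wt t 4) (wt t 0)) by
    orient_factor (1/32 * (1 + t^2)^3 * t * (3 - t^2)^2 / den t ^ 2 * (9 + t^2)).
  assert (0 < orient (bt t) (wt t 6) (wt t 0)) by
    orient_factor (1/32 * (1 + t^2)^2 * t / den t * (61 + t^4 - 34 * t^2)).
  assert (0 < orient (bt t) (wt t 4) (wt t 6)) by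
    orient_factor (1/2 * (1 + t^2)^2 * t / den t ^ 2 * (20 * t^2 - 11 - 3 * t^4 - 2 * t^6)).
  apply conv_hull_triangle_of_orient_pos; lra.
Qed.

Lemma a7_in_triangle_k4 t : k4_params t ->
  conv_hull (triangle 1 (a_tan t ^ 2)%C (a_tan t ^ 6)%C) (a_tan t ^ 7)%C.
Proof.
  intros (Ht & Hv & Hg).
  assert (0 <= (t ^ 2 - 4/5) * (183/100 - t ^ 2)) by nra.
  assert (orient (a_tan t ^ 7)%C (a_tan t ^ 2)%C (a_tan t ^ 6)%C < 0) by
    orient_factor (- (1/8192 * (1 + t^2)^3 * t * (49 + 3 * t^4 + t^6 - 13 * t^2))).
  assert (orient 1 (a_tan t ^ 7)%C (a_tan t ^ 6)%C < 0) by
    orient_factor (- (1/8192 * (1 + t^2) * t * (3 - t^2) * (176 * t^2 + 34 * t^4 + 8 * t^6 +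
      t^8 - 107))).
  assert (orient 1 (a_tan t ^ 2)%C (a_tan t ^ 7)%C < 0) by
    orient_factor (- (1/512 * (1 + t^2) * t * (233 + t^6 - 93 * t^2 - 5 * t^4))).
  apply conv_hull_triangle_of_orient_neg; lra.
Qed.

(** * Every z_j and w_j lies in co(V_k) *)

Lemma spiral_tan_in_hull_of_prefix (U : C -> Prop) t N :
  conv_hull U 0 -> conv_hull U 1 ->
  (forall j, (j < N)%nat -> conv_hull U (zt t (S j)) /\ conv_hull U (wt t j)) ->
  conv_hull (fun y => y = RtoC 0 \/ exists e, (e < N)%nat /\ y = (a_tan t ^ e)%C) (a_tan t ^ N)%C ->
  forall j, conv_hull U (zt t (S j)) /\ conv_hull U (wt t j).
Proof.
  intros H0 H1 Hpre HN j.
  assert (Hz : forall i, zt t (S i) = (c_tan t * a_tan t * a_tan t ^ i)%C)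
    by (intro; unfold zt; rewrite Cpow_S; ring).
  rewrite Hz. apply (geometric_in_hull_of_prefix U (a_tan t) _ (RtoC (c_tan t * q_tan t)) N);
    [exact H0 | exact H1 | | exact HN].
  intros i Hi. rewrite <- Hz. apply Hpre, Hi.
Qed.

Section LargeHull.
Variables (V : C -> Prop) (k : nat) (t l m : R).
Hypotheses (Hk : (5 <= k)%nat) (Hp : large_params t l m)
  (Hs : (a_tan t ^ (k - 1))%C = s_lm t l m).
Hypotheses (Hb : V (bt t)) (Hz : forall j, (j <= k)%nat -> V (zt t (S j)))
  (Hw : forall j, (1 <= j <= k)%nat -> V (wt t j)).

Let spow_shift p : spow t l m p = (a_tan t ^ (k - 1 + p))%C.
Proof. unfold spow. now rewrite Cpow_add_r, Hs. Qed.

Let zs_shift p : zs t l m p = zt t (k - 1 + p).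
Proof. unfold zs, zt. now rewrite spow_shift. Qed.

Let ws_shift p : ws t l m p = wt t (k - 1 + p).
Proof. unfold ws, wt. now rewrite spow_shift. Qed.

Let Pz j : (j <= k)%nat -> conv_hull V (zt t (S j)).
Proof. intros. apply conv_hull_singleton, Hz. lia. Qed.

Let Pw j : (1 <= j <= k)%nat -> conv_hull V (wt t j).
Proof. intros. apply conv_hull_singleton, Hw. lia. Qed.

Lemma anchors_in_hull_large : let P := conv_hull V in
  P 0 /\ P 1 /\ P (wt t 0) /\ P (zs t l m 3) /\ P (zs t l m 4) /\ P (ws t l m 2) /\ P (ws t l m 3).
Proof.
  intros P.
  assert (Pb : P (bt t)) by (apply conv_hull_singleton, Hb).
  assert (Pzs : forall p, (p <= 2)%nat -> P (zs t l m p)).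
  { intros p Hle. rewrite zs_shift. replace (k - 1 + p)%nat with (S (k - 2 + p)) by lia.
    apply Pz. lia. }
  assert (Pws : forall p, (p <= 1)%nat -> P (ws t l m p))
    by (intros; rewrite ws_shift; apply Pw; lia).
  assert (Pzs3 : P (zs t l m 3)).
  { apply (conv_hull_of_triangle _ _ _ _ _ (zs3_in_triangle t l m Hp));
      [apply (Pz 0%nat) | apply Pzs | apply (Pw 1%nat)]; lia. }
  assert (P0 : P 0).
  { apply (conv_hull_of_triangle _ _ _ _ _ (origin_in_triangle t l m Hp));
      [apply (Pz 0%nat) | apply Pzs | exact Pzs3]; lia. }
  assert (Pws2 : P (ws t l m 2)).
  { apply (conv_hull_of_triangle _ _ _ _ _ (ws2_in_triangle t l m Hp));
      [apply (Pw 1%nat) | exact Pb | apply Pws]; lia. }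
  assert (Pwt0 : P (wt t 0)).
  { apply (conv_hull_of_triangle _ _ _ _ _ (wt0_in_triangle t (proj1 Hp)));
      [exact Pb | exact P0 | apply (Pw 1%nat)]; lia. }
  assert (P1 : P 1).
  { apply (conv_hull_of_triangle _ _ _ _ _ (one_in_triangle t l m Hp));
      [exact Pwt0 | apply Pws | exact Pws2]; lia. }
  repeat split; try assumption.
  - apply (conv_hull_of_triangle _ _ _ _ _ (zs4_in_triangle t l m Hp)); assumption.
  - apply (conv_hull_of_triangle _ _ _ _ _ (ws3_in_triangle t l m Hp));
      [exact P1 | exact Pws2 | apply (Pz 1%nat)]; lia.
Qed.

Lemma spiral_in_hull_large j : conv_hull V (zt t (S j)) /\ conv_hull V (wt t j).
Proof.
  destruct anchors_in_hull_large as (P0 & P1 & Pwt0 & Pzs3 & Pzs4 & Pws2 & Pws3).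
  apply (spiral_tan_in_hull_of_prefix V t (k + 3)); [exact P0 | exact P1 | |].
  - intros i Hi. split.
    + destruct (Nat.le_gt_cases i k); [now apply Pz|].
      destruct (Nat.eq_dec i (k + 1)) as [->|].
      * replace (S (k + 1)) with (k - 1 + 3)%nat by lia. now rewrite <- zs_shift.
      * replace (S i) with (k - 1 + 4)%nat by lia. now rewrite <- zs_shift.
    + destruct (Nat.eq_dec i 0) as [->|]; [exact Pwt0|].
      destruct (Nat.le_gt_cases i k); [apply Pw; lia|].
      destruct (Nat.eq_dec i (k + 1)) as [->|].
      * replace (k + 1)%nat with (k - 1 + 2)%nat by lia. now rewrite <- ws_shift.
      * replace i with (k - 1 + 3)%nat by lia. now rewrite <- ws_shift.
  - replace (k + 3)%nat with (k - 1 + 4)%nat by lia. rewrite <- spow_shift.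
    eapply conv_hull_of_triangle; [apply (spow4_in_triangle t l m Hp) | ..];
      apply conv_hull_singleton.
    + now left.
    + right. exists 0%nat. split; [lia | reflexivity].
    + right. exists (k - 1 + 3)%nat. split; [lia | apply spow_shift].
Qed.

End LargeHull.

Section FourHull.
Variables (V : C -> Prop) (t : R).
Hypotheses (Hp : k4_params t) (Hb : V (bt t)) (Hz : forall j, (j <= 4)%nat -> V (zt t (S j)))
  (Hw : forall j, (1 <= j <= 4)%nat -> V (wt t j)).

Let Pz p : (1 <= p <= 5)%nat -> conv_hull V (zt t p).
Proof. intros. replace p with (S (p - 1)) by lia. apply conv_hull_singleton, Hz. lia. Qed.

Let Pw j : (1 <= j <= 4)%nat -> conv_hull V (wt t j).
Proof. intros. apply conv_hull_singleton, Hw. lia. Qed.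

Lemma anchors_in_hull_k4 : let P := conv_hull V in
  P 0 /\ P 1 /\ P (wt t 0) /\ P (zt t 6) /\ P (zt t 7) /\ P (wt t 5) /\ P (wt t 6).
Proof.
  intros P. assert (Pb : P (bt t)) by (apply conv_hull_singleton, Hb).
  assert (Pwt0 : P (wt t 0)).
  { apply (conv_hull_of_triangle _ _ _ _ _ (wt0_in_triangle_k4 t Hp));
      [apply Pz | apply Pz | apply Pw]; lia. }
  repeat split; [| | exact Pwt0 | | | |].
  - apply (conv_hull_of_triangle _ _ _ _ _ (origin_in_triangle_k4 t Hp));
      [apply Pz | apply Pz | apply Pw]; lia.
  - apply (conv_hull_of_triangle _ _ _ _ _ (one_in_triangle_k4 t Hp));
      [apply Pz | apply Pw | apply Pw]; lia.
  - apply (conv_hull_of_triangle _ _ _ _ _ (zt6_in_triangle_k4 t Hp));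
      [exact Pb | apply Pz | apply Pw]; lia.
  - apply (conv_hull_of_triangle _ _ _ _ _ (zt7_in_triangle_k4 t Hp));
      [apply Pz | apply Pz | apply Pw]; lia.
  - apply (conv_hull_of_triangle _ _ _ _ _ (wt5_in_triangle_k4 t Hp));
      [exact Pb | apply Pz | apply Pw]; lia.
  - apply (conv_hull_of_triangle _ _ _ _ _ (wt6_in_triangle_k4 t Hp));
      [exact Pb | apply Pw | exact Pwt0]; lia.
Qed.

Lemma spiral_in_hull_k4 j : conv_hull V (zt t (S j)) /\ conv_hull V (wt t j).
Proof.
  destruct anchors_in_hull_k4 as (P0 & P1 & Pwt0 & Pzt6 & Pzt7 & Pwt5 & Pwt6).
  apply (spiral_tan_in_hull_of_prefix V t 7); [exact P0 | exact P1 | |].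
  - intros i Hi. split.
    + destruct (Nat.le_gt_cases i 4); [apply Pz; lia|].
      destruct (Nat.eq_dec i 5) as [->|]; [exact Pzt6|]. replace i with 6%nat by lia. exact Pzt7.
    + destruct (Nat.eq_dec i 0) as [->|]; [exact Pwt0|].
      destruct (Nat.le_gt_cases i 4); [apply Pw; lia|].
      destruct (Nat.eq_dec i 5) as [->|]; [exact Pwt5|]. replace i with 6%nat by lia. exact Pwt6.
  - eapply conv_hull_of_triangle; [apply (a7_in_triangle_k4 t Hp) | ..];
      apply conv_hull_singleton; right.
    + exists 0%nat. split; [lia | reflexivity].
    + exists 2%nat. split; [lia | reflexivity].
    + exists 6%nat. split; [lia | reflexivity].
Qed.

End FourHull.

(** * Parameters from the angle *)

Lemma is_eta_k_bounds k e : (4 <= k)%nat -> is_eta_k k e -> 0 < e < PI / 3.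
Proof.
  intros Hk [[Hlo Hhi] _]. apply le_INR in Hk. simpl in Hk. pose proof PI_RGT_0.
  pose proof (PI_div_le_PI_div 3 (INR k - 1) ltac:(lra)).
  split; [|lra]. apply Rlt_trans with (PI / INR k); [apply Rdiv_lt_0_compat|]; lra.
Qed.

Lemma tan_in_unit x : 0 < x < PI / 4 -> 0 < tan x < 1.
Proof.
  intros Hx. pose proof PI_RGT_0.
  split; [apply tan_gt_0 | rewrite <- tan_PI4; apply tan_increasing]; lra.
Qed.

Lemma angle_sin_signs k eta : (5 <= k)%nat -> PI / (INR k + 1) < eta < PI / (INR k - 1) ->
  0 < sin (INR (k - 1) * eta) /\ sin (INR (S k) * eta) < 0.
Proof.
  intros Hk [Hlo Hhi]. pose proof (INR_ge_5 k Hk) as HK. pose proof PI_RGT_0.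
  rewrite minus_INR, (S_INR k) by lia. change (INR 1) with 1.
  apply Rlt_div_r in Hhi; [|lra]. apply Rlt_div_l in Hlo; [|lra].
  assert (0 < eta) by nra.
  split; [apply sin_gt_0; nra|].
  replace ((INR k + 1) * eta) with ((INR k + 1) * eta - PI + PI) by ring.
  rewrite neg_sin. enough (0 < sin ((INR k + 1) * eta - PI)) by lra.
  apply sin_gt_0; [nra|].
  assert (2 * eta < PI) by (assert (2 <= INR k - 1) by lra; nra). nra.
Qed.

Lemma s_lm_surj t z : t <> 0 ->
  z = s_lm t (- fst z + snd z * (1 - t ^ 2) / (2 * t)) (- snd z / (2 * t)).
Proof. intros Ht. destruct z as [U W]. unfold s_lm. simpl. f_equal; field; exact Ht. Qed.

Lemma large_params_of_angle k e eta : (5 <= k)%nat -> PI / (INR k + 1) < e ->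
  Phi (S k) e = 0 -> e <= eta < PI / (INR k - 1) ->
  exists l m, large_params (tan eta) l m /\ (a_tan (tan eta) ^ (k - 1))%C = s_lm (tan eta) l m.
Proof.
  intros Hk He Hroot Heta. pose proof (INR_ge_5 k Hk) as HK. pose proof PI_RGT_0.
  pose proof (PI_div_le_PI_div 4 (INR k - 1) ltac:(lra)).
  assert (0 < e) by (apply Rlt_trans with (PI / (INR k + 1)); [apply Rdiv_lt_0_compat|]; lra).
  assert (Hangle : 0 < eta < PI / 3) by lra.
  destruct (angle_sin_signs k eta Hk ltac:(lra)) as [Hsin_lo Hsin_hi].
  pose proof (Phi_nonpos_after_root k e eta Hk He Hroot Heta) as HPhi.
  set (t := tan eta). destruct (tan_in_unit eta ltac:(lra)) as [Ht0 Ht1]. fold t in Ht0, Ht1.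
  destruct (a_mod_bounds eta ltac:(lra)) as [HA [HA2 [HA1 _]]].
  assert (Hpow : forall n, (a_tan t ^ n)%C =
            (a_mod eta ^ n * cos (INR n * eta), - (a_mod eta ^ n * sin (INR n * eta))))
    by (intro; unfold t; rewrite <- (a_of_tan eta Hangle); apply Cpow_a_of).
  pose proof (s_lm_surj t (a_tan t ^ (k - 1))%C ltac:(lra)) as Hs.
  set (m := - snd (a_tan t ^ (k - 1))%C / (2 * t)) in Hs.
  set (l := - fst (a_tan t ^ (k - 1))%C + _) in Hs.
  exists l, m. split; [|exact Hs].
  assert (0 < a_mod eta ^ (k - 1)) by (apply pow_lt; lra).
  assert (Hm : 0 < m).
  { unfold m. rewrite Hpow. cbn [snd]. apply Rdiv_lt_0_compat; nra. }
  assert (Hl : 0 < l).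
  { assert (Him : snd (a_tan t ^ S k)%C = t * l / 2).
    { replace (S k) with (k - 1 + 2)%nat by lia. rewrite Cpow_add_r, Hs. apply Im_s_lm_mul_sqr. }
    rewrite Hpow in Him. cbn [snd] in Him.
    assert (0 < a_mod eta ^ S k) by (apply pow_lt; lra).
    assert (a_mod eta ^ S k * sin (INR (S k) * eta) < 0) by (apply Rmult_pos_neg; lra).
    apply (Rmult_lt_reg_l t); lra. }
  assert (Hl4 : l <= 1/4).
  { assert (- fst (a_tan t ^ (k - 1))%C <= a_mod eta ^ (k - 1)).
    { rewrite Hpow. cbn [fst]. pose proof (COS_bound (INR (k - 1) * eta)). nra. }
    assert (a_mod eta ^ (k - 1) <= a_mod eta ^ 4) by (apply pow_le_pow_of_le1; lra || lia).
    assert (l = - fst (a_tan t ^ (k - 1))%C - m * (1 - t ^ 2)) by (unfold l, m; field; lra).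
    assert (0 <= m * (1 - t ^ 2)) by (apply Rmult_le_pos; nra).
    nra. }
  assert (Hphi : phi_lm t l m <= 0).
  { pose proof (Phi_as_coord eta Hangle (k - 1)) as HE.
    replace (S (S (k - 1))) with (S k) in HE by lia.
    rewrite (a_of_tan eta Hangle) in HE. fold t in HE. rewrite Hs, Phi_coord_s_lm in HE.
    assert (0 < a_mod eta ^ S (k - 1)) by (apply pow_lt; lra). nra. }
  repeat split; lra.
Qed.

Lemma g4_as_quartic t :
  g4 t = (t ^ 2) ^ 4 + 16 * (t ^ 2) ^ 3 + 10 * (t ^ 2) ^ 2 - 152 * t ^ 2 + 109.
Proof. unfold g4. ring. Qed.

Lemma g4_pos_small t : t ^ 2 <= 4/5 -> 0 < g4 t.
Proof.
  intros Hv. rewrite g4_as_quartic.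
  assert (0 <= t ^ 2) by (rewrite <- Rsqr_pow2; apply Rle_0_sqr).
  set (v := t ^ 2) in *. nra.
Qed.

Lemma g4_nonpos_after_root t1 t : 4/5 <= t1 ^ 2 < 1 -> g4 t1 = 0 ->
  t1 ^ 2 <= t ^ 2 <= 183/100 -> g4 t <= 0.
Proof.
  rewrite !g4_as_quartic. set (v1 := t1 ^ 2). set (v := t ^ 2). intros Hv1 Hroot Hv.
  destruct (Rle_lt_dec v (14/10)) as [Hsmall|Hlarge]; [|nra].
  assert (v ^ 3 + v ^ 2 * v1 + v * v1 ^ 2 + v1 ^ 3 + 16 * (v ^ 2 + v * v1 + v1 ^ 2)
          + 10 * (v + v1) - 152 <= 0) by nra.
  replace (v ^ 4 + 16 * v ^ 3 + 10 * v ^ 2 - 152 * v + 109)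
    with ((v - v1) * (v ^ 3 + v ^ 2 * v1 + v * v1 ^ 2 + v1 ^ 3 + 16 * (v ^ 2 + v * v1 + v1 ^ 2)
          + 10 * (v + v1) - 152) + (v1 ^ 4 + 16 * v1 ^ 3 + 10 * v1 ^ 2 - 152 * v1 + 109)) by ring.
  rewrite Hroot. nra.
Qed.

Lemma k4_params_of_angles e4 e5 eta : is_eta_k 4 e4 -> is_eta_k 5 e5 -> e5 <= eta < e4 ->
  k4_params (tan eta).
Proof.
  intros H4 H5 Heta.
  pose proof (is_eta_k_bounds 4 e4 ltac:(lia) H4) as He4.
  pose proof (is_eta_k_bounds 5 e5 ltac:(lia) H5) as He5.
  destruct H4 as [[H4lo _] H4root], H5 as [[H5lo H5hi] H5root].
  simpl INR in *. pose proof PI_RGT_0.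
  set (t1 := tan e5). set (t4 := tan e4). set (t := tan eta).
  assert (Ht1 : 0 < t1 < 1) by (apply tan_in_unit; lra).
  assert (t1 <= t).
  { destruct (Req_dec e5 eta) as [->|]; [unfold t1, t; lra|]. apply Rlt_le, tan_increasing; lra. }
  assert (0 < t < t4) by (split; [apply tan_gt_0 | apply tan_increasing]; lra).
  assert (Hroot1 : g4 t1 = 0).
  { pose proof (Phi_as_coord e5 He5 3) as HE. rewrite H5root, Rmult_0_r, (a_of_tan e5 He5) in HE.
    fold t1 in HE. rewrite Phi_coord_a_tan_cube in HE.
    assert (Hprod : t1 * g4 t1 = 0) by lra. destruct (Rmult_integral _ _ Hprod); lra. }
  assert (Hroot4 : (1 + t4 ^ 2) ^ 2 = 8).
  { pose proof (Phi_as_coord e4 He4 2) as HE. rewrite H4root, Rmult_0_r, (a_of_tan e4 He4) in HE.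
    fold t4 in HE. rewrite Phi_coord_a_tan_sqr in HE.
    destruct (tan_angle_range e4 He4) as [Ht4 Ht43]. fold t4 in Ht4, Ht43.
    assert (Hprod : t4 * (t4 ^ 2 - 3) * ((1 + t4 ^ 2) ^ 2 - 8) = 0) by lra.
    destruct (Rmult_integral _ _ Hprod) as [Hz|]; [destruct (Rmult_integral _ _ Hz)|]; lra. }
  assert (4/5 <= t1 ^ 2).
  { destruct (Rle_lt_dec (t1 ^ 2) (4/5)) as [Hle|]; [|lra].
    pose proof (g4_pos_small t1 Hle). lra. }
  assert (t ^ 2 < t4 ^ 2) by nra.
  assert ((1 + t ^ 2) ^ 2 < 8) by (rewrite <- Hroot4; nra).
  assert (t1 ^ 2 <= t ^ 2 <= 183/100) by (split; nra).
  split; [lra | split; [lra|]].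
  apply (g4_nonpos_after_root t1); [split; nra | exact Hroot1 | lra].
Qed.

Lemma Vk_set_tan k eta : 0 < eta < PI / 3 ->
  Vk_set k eta (bt (tan eta)) /\
  (forall j, (j <= k)%nat -> Vk_set k eta (zt (tan eta) (S j))) /\
  (forall j, (1 <= j <= k)%nat -> Vk_set k eta (wt (tan eta) j)).
Proof.
  intros Heta. repeat split.
  - left. now rewrite b0_of_tan.
  - intros j Hj. right; left. exists j. split; [exact Hj|]. now rewrite z_of_tan.
  - intros j Hj. right; right. exists j. split; [exact Hj|]. now rewrite w_of_tan.
Qed.

Theorem lemma6p6 (k : nat) (etak etak1 eta : R) :
  (4 <= k)%nat ->
  is_eta_k k etak -> is_eta_k (S k) etak1 ->
  etak1 <= eta < etak ->
  forall x : C, conv_hull (V_set eta) x <-> conv_hull (Vk_set k eta) x.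
Proof.
  intros Hk Hetak Hetak1 Heta.
  assert (Hangle : 0 < eta < PI / 3).
  { pose proof (is_eta_k_bounds k etak Hk Hetak).
    pose proof (is_eta_k_bounds (S k) etak1 ltac:(lia) Hetak1). lra. }
  destruct (Vk_set_tan k eta Hangle) as (Hb & Hz & Hw).
  apply conv_hull_V_iff_Vk. intros j. rewrite (z_of_tan eta Hangle), (w_of_tan eta Hangle).
  destruct (Nat.eq_dec k 4) as [->|Hk4].
  - apply spiral_in_hull_k4; [apply (k4_params_of_angles etak etak1) | ..]; assumption.
  - destruct Hetak as [[_ Hhi] _], Hetak1 as [[Hlo _] Hroot]. rewrite S_INR in Hlo.
    destruct (large_params_of_angle k etak1 eta ltac:(lia) Hlo Hroot ltac:(lra))
      as (l & m & Hp & Hs).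
    exact (spiral_in_hull_large _ k _ l m ltac:(lia) Hp Hs Hb Hz Hw j).
Qed.
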